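(* Let $p(y)=\prod_{j=1}^n(y+\theta_j)$ be a real polynomial with $0\le\theta_j\le1$ for all $j$. Then the bivariate polynomial $p\big(y-xy(y+1)\big)=\sum_{k=0}^{n}p^{(k)}(y)\frac{(-xy(y+1))^k}{k!}$ is stable.
   Context: A polynomial $P\in\mathbb{C}[x,y]$ is stable if $P(x,y)\neq0$ whenever $\operatorname{Im}x>0$ and $\operatorname{Im}y>0$. *)

From Stdlib Require Import Reals.
Open Scope R_scope.

Definition CC : Type := (R * R)%type.
Definition Cre (z : CC) : R := fst z.
Definition Cim (z : CC) : R := snd z.
Definition RtoC (r : R) : CC := (r, 0).
Definition Czero : CC := (0, 0).
Definition Cone : CC := (1, 0).
Definition Cadd (z w : CC) : CC := (fst z + fst w, snd z + snd w).
Definition Copp (z : CC) : CC := (- fst z, - snd z).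
Definition Cmul (z w : CC) : CC :=
  (fst z * fst w - snd z * snd w, fst z * snd w + snd z * fst w).

Fixpoint Cprod (n : nat) (f : nat -> CC) : CC :=
  match n with
  | O => Cone
  | S k => Cmul (Cprod k f) (f k)
  end.

(* Evaluation of p(y) = prod_{j=1}^n (y + theta_j) at a complex point
   (theta indexed from 0 to n-1). *)
Definition p_eval (n : nat) (theta : nat -> R) (y : CC) : CC :=
  Cprod n (fun j => Cadd y (RtoC (theta j))).

Definition stable2 (P : CC -> CC -> CC) : Prop :=
  forall x y : CC, Cim x > 0 -> Cim y > 0 -> P x y <> Czero.

(* Since p(w) vanishes only at the points w = -theta_j, it suffices to show,
   for Im x > 0, Im y > 0 and 0 <= t <= 1, that the factor
       F = y - x y (y+1) + t
   is nonzero.  Writing y + t = t (y+1) + (1-t) y and multiplying F by the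
   conjugate of y (y+1) gives
       F * conj(y (y+1)) = t |y+1|^2 conj y + (1-t) |y|^2 conj (y+1)
                           - x |y|^2 |y+1|^2,
   whose imaginary part is
       - Im y (t |y+1|^2 + (1-t) |y|^2) - Im x |y|^2 |y+1|^2  <  0.
   (Equivalently: x = t/y + (1-t)/(y+1) would lie in the closed lower half
   plane.)  The file first proves that a product of complex numbers vanishes
   only if a factor does, then the imaginary-part identity above and its sign,
   and derives the theorem by locating a vanishing factor of p. *)

From Stdlib Require Import Reals Lra Psatz.
Open Scope R_scope.

Definition Cconj (z : CC) : CC := (fst z, - snd z).
Definition Cnorm2 (z : CC) : R := fst z * fst z + snd z * snd z.

Lemma Cmul_integral (z w : CC) : Cmul z w = Czero -> z = Czero \/ w = Czero.
Proof.
  destruct z as [p q], w as [r s]; unfold Cmul, Czero; simpl.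
  intros H; injection H; intros Him Hre.
  destruct (Req_dec (p * p + q * q) 0) as [Hz | Hz].
  - left. assert (p = 0) by nra. assert (q = 0) by nra. subst; reflexivity.
  - right.
    (* Multiplying w by |z|^2 = conj z * z shows w = 0. *)
    assert (Hr : (p * p + q * q) * r = 0).
    { replace ((p * p + q * q) * r) with (p * (p * r - q * s) + q * (p * s + q * r))
        by ring.
      rewrite Hre, Him; ring. }
    assert (Hs : (p * p + q * q) * s = 0).
    { replace ((p * p + q * q) * s) with (p * (p * s + q * r) - q * (p * r - q * s))
        by ring.
      rewrite Hre, Him; ring. }
    apply Rmult_integral in Hr as [Hr | Hr]; [contradiction |].
    apply Rmult_integral in Hs as [Hs | Hs]; [contradiction |].
    subst; reflexivity.
Qed.

Lemma Cprod_eq0 (n : nat) (f : nat -> CC) :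
  Cprod n f = Czero -> exists j, (j < n)%nat /\ f j = Czero.
Proof.
  induction n as [| n IH]; simpl; intros H.
  - unfold Cone, Czero in H. injection H; intros; lra.
  - destruct (Cmul_integral _ _ H) as [Hprod | Hlast].
    + destruct (IH Hprod) as [j [Hj Hf]]. exists j; split; [lia | exact Hf].
    + exists n; split; [lia | exact Hlast].
Qed.

Lemma Cnorm2_pos_upper (z : CC) : Cim z > 0 -> Cnorm2 z > 0.
Proof.
  destruct z as [a b]; unfold Cim, Cnorm2; simpl; intros Hb.
  assert (0 <= a * a) by apply Rle_0_sqr. nra.
Qed.

(* The imaginary-part identity for F * conj (y (y+1)), where
   F = y - x y (y+1) + t; it rests on y + t = t (y+1) + (1-t) y. *)
Lemma factor_conj_im (x y : CC) (t : R) :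
  Cim (Cmul (Cadd (Cadd y (Copp (Cmul x (Cmul y (Cadd y Cone))))) (RtoC t))
            (Cconj (Cmul y (Cadd y Cone))))
  = - (Cim y * (t * Cnorm2 (Cadd y Cone) + (1 - t) * Cnorm2 y)
       + Cim x * (Cnorm2 y * Cnorm2 (Cadd y Cone))).
Proof.
  destruct x as [c d], y as [a b].
  unfold Cim, Cmul, Cadd, Copp, RtoC, Cone, Cconj, Cnorm2; simpl; ring.
Qed.

Lemma factor_nonzero (x y : CC) (t : R) :
  Cim x > 0 -> Cim y > 0 -> 0 <= t <= 1 ->
  Cadd (Cadd y (Copp (Cmul x (Cmul y (Cadd y Cone))))) (RtoC t) <> Czero.
Proof.
  intros Hx Hy Ht HF.
  pose proof (factor_conj_im x y t) as Hid.
  rewrite HF in Hid.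
  replace (Cim (Cmul Czero _)) with 0 in Hid by (unfold Cim, Cmul, Czero; simpl; ring).
  assert (Hy2 : Cnorm2 y > 0) by (apply Cnorm2_pos_upper; exact Hy).
  assert (Hy1 : Cnorm2 (Cadd y Cone) > 0).
  { apply Cnorm2_pos_upper. unfold Cim, Cadd, Cone in *; simpl; lra. }
  assert (Hmix : t * Cnorm2 (Cadd y Cone) + (1 - t) * Cnorm2 y >= 0) by nra.
  assert (Hprod : Cim x * (Cnorm2 y * Cnorm2 (Cadd y Cone)) > 0).
  { apply Rmult_lt_0_compat; [lra | apply Rmult_lt_0_compat; lra]. }
  nra.
Qed.

Theorem mainTheorem6 (n : nat) (theta : nat -> R)
  (Htheta : forall j : nat, (j < n)%nat -> 0 <= theta j <= 1) :
  stable2 (fun x y : CC =>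
    p_eval n theta (Cadd y (Copp (Cmul x (Cmul y (Cadd y Cone)))))).
Proof.
  intros x y Hx Hy Hp.
  unfold p_eval in Hp.
  destruct (Cprod_eq0 _ _ Hp) as [j [Hj Hfactor]].
  exact (factor_nonzero x y (theta j) Hx Hy (Htheta j Hj) Hfactor).
Qed.
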